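(* Let $p\geq3$ be a prime and $n\geq 1$. If $p>n$ then $\mathcal{CP}^{\mathsf{s}}_p(n)=\mathcal{SP}(n)$, and if $p=n$ then $\mathcal{CP}^{\mathsf{s}}_p(n)=\mathcal{SP}(n)\setminus\{(n)\}$.
   Context: $\mathcal{SP}(n)$ is the set of strict partitions $\xi=(\xi_1>\xi_2>\cdots)$ of $n$. $\mathcal{CP}^{\mathsf{s}}_p(n)$ is the set of $\xi\in\mathcal{SP}(n)$ such that either $1\leq\xi_1\leq\frac{p+1}{2}$, or there is an integer $u$ with $1\leq u\leq\frac{p-3}{2}$, $\xi_1=p-u$ and $\xi_2\leq u$. *)

From mathcomp Require Import all_boot.
Set Implicit Arguments. Unset Strict Implicit. Unset Printing Implicit Defensive.

Definition is_strict_partition (xi : seq nat) : bool :=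
  sorted (fun a b => b < a) xi && all (fun a => 0 < a) xi.

Definition SP (n : nat) (xi : seq nat) : bool :=
  is_strict_partition xi && (sumn xi == n).

(* parts xi_1, xi_2, with the usual convention xi_i = 0 if absent *)
Definition part (xi : seq nat) (i : nat) : nat := nth 0 xi i.

(* CP^s_p(n): xi in SP(n) such that either 1 <= xi_1 <= (p+1)/2,
   or there is u with 1 <= u <= (p-3)/2, xi_1 = p - u and xi_2 <= u.
   Fractions are cleared: x <= (p+1)/2 <-> 2x <= p+1, u <= (p-3)/2 <-> 2u+3 <= p. *)
Definition CPs (p n : nat) (xi : seq nat) : Prop :=
  SP n xi /\
  ((1 <= part xi 0 /\ 2 * part xi 0 <= p + 1) \/
   (exists u : nat, [/\ 1 <= u, 2 * u + 3 <= p,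
                       part xi 0 = p - u & part xi 1 <= u])).

(* The condition on a strict partition xi of n only involves xi_1 and xi_2, and
   xi_1 + xi_2 <= n.  For odd p and 0 < xi_1 < p, either 2 xi_1 <= p + 1, or
   2 xi_1 >= p + 3 by parity and u := p - xi_1 is admissible because
   xi_2 <= p - xi_1.  If n < p every part is below p; if n = p the only strict
   partition with xi_1 = p is (p), and xi_1 = p is never allowed. *)

From mathcomp Require Import all_boot.
From mathcomp Require Import zify.

Set Implicit Arguments.
Unset Strict Implicit.

Lemma nth0_addn_nth1_leq_sumn (s : seq nat) : nth 0 s 0 + nth 0 s 1 <= sumn s.
Proof. by case: s => [|a [|b s]] //=; rewrite addnA leq_addr. Qed.

Section StrictPartition.

Context {n : nat} {xi : seq nat} (xiSP : SP n xi).

Lemma SP_part01_leq : part xi 0 + part xi 1 <= n.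
Proof. by case/andP: xiSP => _ /eqP <-; apply: nth0_addn_nth1_leq_sumn. Qed.

Lemma SP_part0_leq : part xi 0 <= n.
Proof. exact: leq_trans (leq_addr _ _) SP_part01_leq. Qed.

Lemma SP_part0_gt0 : 0 < n -> 0 < part xi 0.
Proof.
case/andP: xiSP => /andP [_ pos_xi] /eqP sum_xi.
by case: xi pos_xi sum_xi => [|a s] /= => [_ <- | /andP [a_gt0 _] _].
Qed.

Lemma SP_part0_eq : 0 < n -> part xi 0 = n -> xi = [:: n].
Proof.
case/andP: xiSP => /andP [_ pos_xi] /eqP sum_xi.
case: xi pos_xi sum_xi => [|a [|b s]] /=; rewrite /part /=.
- by move=> _ <-.
- by rewrite addn0 => _ -> .
- by case/and3P=> _ b_gt0 _ <- _ a_eq; exfalso; lia.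
Qed.

End StrictPartition.

Lemma CPs_of_part0_ltn (p n : nat) (xi : seq nat) :
  odd p -> SP n xi -> 0 < part xi 0 < p -> part xi 0 + part xi 1 <= p ->
  CPs p n xi.
Proof.
move=> odd_p xiSP /andP [xi1_gt0 xi1_lt_p] xi12_le_p; split=> //.
have [small|large] := leqP (2 * part xi 0) (p + 1); first by left.
have p_half : p = (p./2).*2.+1 by rewrite -[LHS]odd_double_half odd_p.
by right; exists (p - part xi 0); split; lia.
Qed.

Lemma CPs_part0_neq (p n : nat) (xi : seq nat) :
  1 < p -> CPs p n xi -> part xi 0 <> p.
Proof. by move=> p_gt1 [_ [[_ le_p1] | [u [u_gt0 _ xi1_eq _]]]] xi1_eq_p; lia. Qed.

Lemma CPs_of_SP (p n : nat) (xi : seq nat) :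
  odd p -> 0 < n -> n <= p -> SP n xi -> part xi 0 < p -> CPs p n xi.
Proof.
move=> odd_p n_gt0 n_le_p xiSP xi1_lt_p.
apply: CPs_of_part0_ltn => //; first by rewrite (SP_part0_gt0 xiSP).
exact: leq_trans (SP_part01_leq xiSP) n_le_p.
Qed.

Theorem lemma3p19 (p n : nat) :
  prime p -> 3 <= p -> 1 <= n ->
  (n < p -> forall xi : seq nat, CPs p n xi <-> SP n xi) /\
  (p = n -> forall xi : seq nat, CPs p n xi <-> (SP n xi /\ xi <> [:: n])).
Proof.
move=> p_prime p_ge3 n_gt0.
have odd_p : odd p by case: (even_prime p_prime) p_ge3 => // ->.
split=> [n_lt_p xi | p_eq_n xi]; split.
- by case.
- move=> xiSP; apply: (CPs_of_SP odd_p n_gt0 (ltnW n_lt_p) xiSP).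
  exact: leq_ltn_trans (SP_part0_leq xiSP) n_lt_p.
- move=> xiCP; split=> [|xi_eq]; first by case: xiCP.
  by apply: (CPs_part0_neq (ltnW p_ge3) xiCP); rewrite xi_eq p_eq_n.
- case=> xiSP xi_neq; apply: (CPs_of_SP odd_p n_gt0 _ xiSP); first by rewrite p_eq_n.
  rewrite p_eq_n ltn_neqAle SP_part0_leq // andbT.
  by apply/eqP=> /(SP_part0_eq xiSP n_gt0).
Qed.
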